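(* Let $n\geq 1$ be an integer and let $0\leq p_0\leq p_1\leq\cdots\leq p_n\leq 1$. Then there exists an index $i\in\{1,\dots,n\}$ such that for every $\alpha\in[0,1]$, \[ h_2(\alpha p_{i-1}+(1-\alpha)p_i)-\alpha h_2(p_{i-1})-(1-\alpha)h_2(p_i)\leq \frac{8}{(n+1)^2}. \]
   Context: $h_2(p)=-p\log p-(1-p)\log(1-p)$ is the binary entropy function with natural logarithm. *)

From Stdlib Require Import Reals.
Open Scope R_scope.

Definition xlnx (x : R) : R := if Rle_dec x 0 then 0 else x * ln x.

Definition h2 (p : R) : R := - xlnx p - xlnx (1 - p).

(* Writing phi x = x ln x, the tangent-line bound phi y <= y ln w + y^2/w - y
   at w = a u + (1-a) v gives the Jensen gap
   a phi u + (1-a) phi v - phi w <= (sqrt u - sqrt v)^2.  Hence the concavity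
   gap of h2 between p_(i-1) and p_i is at most A^2 + B^2, where
   A = sqrt p_i - sqrt p_(i-1) and B = sqrt (1-p_(i-1)) - sqrt (1-p_i) are
   nonnegative.  The sums A + B are the increments of the nondecreasing
   sequence g k = sqrt p_k - sqrt (1-p_k), whose total increase is at most 2,
   so some increment is at most 2/n and the gap is at most 4/n^2, which is
   below 8/(n+1)^2 once n >= 3.  For n <= 2 the gap is at most ln 2 < 8/9. *)

From Stdlib Require Import Reals Lra Lia Psatz.
Open Scope R_scope.

Lemma ln_le_sub_1 y : 0 < y -> ln y <= y - 1.
Proof. intros Hy. pose proof (exp_ineq1_le (ln y)) as H. rewrite exp_ln in H; lra. Qed.

Lemma ln_sub_le y w : 0 < y -> 0 < w -> ln y - ln w <= y / w - 1.
Proof.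
  intros Hy Hw.
  assert (Hyw : 0 < y / w) by (apply Rdiv_lt_0_compat; assumption).
  replace (ln y - ln w) with (ln (y / w)).
  - exact (ln_le_sub_1 _ Hyw).
  - unfold Rdiv. rewrite ln_mult, ln_Rinv by (auto; apply Rinv_0_lt_compat; auto). ring.
Qed.

Lemma xlnx_pos y : 0 < y -> xlnx y = y * ln y.
Proof. intros Hy. unfold xlnx. destruct (Rle_dec y 0); [lra | reflexivity]. Qed.

Lemma xlnx_nonpos y : y <= 0 -> xlnx y = 0.
Proof. intros Hy. unfold xlnx. destruct (Rle_dec y 0); [reflexivity | lra]. Qed.

Lemma xlnx_le y w : 0 <= y -> 0 < w -> xlnx y <= y * ln w + y * y / w - y.
Proof.
  intros Hy Hw. destruct (Req_dec y 0) as [->|Hy0].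
  - rewrite xlnx_nonpos by lra. unfold Rdiv. lra.
  - rewrite xlnx_pos by lra.
    assert (H : y * (ln y - ln w) <= y * (y / w - 1))
      by (apply Rmult_le_compat_l; [lra | apply ln_sub_le; lra]).
    replace (y * (y / w - 1)) with (y * y / w - y) in H by (field; lra). lra.
Qed.

Lemma xlnx_ge y w : 0 <= y -> 0 < w -> y * ln w + y - w <= xlnx y.
Proof.
  intros Hy Hw. destruct (Req_dec y 0) as [->|Hy0].
  - rewrite xlnx_nonpos by lra. lra.
  - rewrite xlnx_pos by lra.
    assert (H : y * (ln w - ln y) <= y * (w / y - 1))
      by (apply Rmult_le_compat_l; [lra | apply ln_sub_le; lra]).
    replace (y * (w / y - 1)) with (w - y) in H by (field; lra). lra.
Qed.

Lemma Rmult_xlnx_eq_0 a u : a * u = 0 -> a * xlnx u = 0.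
Proof.
  intros H. destruct (Rmult_integral _ _ H) as [-> | ->].
  - ring.
  - rewrite xlnx_nonpos by lra. ring.
Qed.

Lemma xlnx_mix_gap_le a u v : 0 <= a <= 1 -> 0 <= u -> 0 <= v ->
  a * xlnx u + (1 - a) * xlnx v - xlnx (a * u + (1 - a) * v)
  <= (sqrt u - sqrt v) ^ 2.
Proof.
  intros Ha Hu Hv.
  assert (Hau : 0 <= a * u) by (apply Rmult_le_pos; lra).
  assert (Hbv : 0 <= (1 - a) * v) by (apply Rmult_le_pos; lra).
  set (w := a * u + (1 - a) * v).
  destruct (Rle_dec w 0) as [Hw0|Hw0].
  - rewrite (Rmult_xlnx_eq_0 a u), (Rmult_xlnx_eq_0 (1 - a) v), xlnx_nonpos
      by (unfold w in *; lra).
    pose proof (pow2_ge_0 (sqrt u - sqrt v)). lra.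
  - assert (Hw : 0 < w) by lra.
    set (s := sqrt u). set (t := sqrt v).
    assert (Hs : u = s * s) by (symmetry; apply sqrt_sqrt; lra).
    assert (Ht : v = t * t) by (symmetry; apply sqrt_sqrt; lra).
    assert (Hgap : a * xlnx u + (1 - a) * xlnx v - xlnx w
                   <= (a * u * u + (1 - a) * v * v - w * w) / w).
    { pose proof (xlnx_le u w Hu Hw). pose proof (xlnx_le v w Hv Hw).
      replace ((a * u * u + (1 - a) * v * v - w * w) / w) with
        (a * (u * ln w + u * u / w - u) + (1 - a) * (v * ln w + v * v / w - v)
         - w * ln w)
        by (generalize (ln w); intros L; unfold w in *; field; lra).
      rewrite (xlnx_pos w Hw). nra. }
    (* a u^2 + (1-a) v^2 - w^2 = a (1-a) (s-t)^2 (s+t)^2, and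
       w - a (1-a) (s+t)^2 = (a s - (1-a) t)^2. *)
    assert (Hsq : a * u * u + (1 - a) * v * v - w * w <= w * (s - t) ^ 2).
    { unfold w. rewrite Hs, Ht.
      pose proof (pow2_ge_0 ((s - t) * (a * s - (1 - a) * t))). nra. }
    assert ((a * u * u + (1 - a) * v * v - w * w) / w <= (s - t) ^ 2).
    { apply (Rmult_le_reg_r w); [exact Hw|].
      unfold Rdiv. rewrite Rmult_assoc, Rinv_l by lra. lra. }
    lra.
Qed.

Lemma h2_mix_gap_le a x y : 0 <= a <= 1 -> 0 <= x <= 1 -> 0 <= y <= 1 ->
  h2 (a * x + (1 - a) * y) - a * h2 x - (1 - a) * h2 y
  <= (sqrt y - sqrt x) ^ 2 + (sqrt (1 - x) - sqrt (1 - y)) ^ 2.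
Proof.
  intros Ha Hx Hy. unfold h2.
  pose proof (xlnx_mix_gap_le a x y Ha ltac:(lra) ltac:(lra)).
  pose proof (xlnx_mix_gap_le a (1 - x) (1 - y) Ha ltac:(lra) ltac:(lra)).
  replace (1 - (a * x + (1 - a) * y)) with (a * (1 - x) + (1 - a) * (1 - y)) by ring.
  replace ((sqrt y - sqrt x) ^ 2) with ((sqrt x - sqrt y) ^ 2) by ring.
  lra.
Qed.

Lemma h2_nonneg x : 0 <= x <= 1 -> 0 <= h2 x.
Proof.
  intros Hx. unfold h2.
  pose proof (xlnx_le x 1 ltac:(lra) ltac:(lra)).
  pose proof (xlnx_le (1 - x) 1 ltac:(lra) ltac:(lra)).
  rewrite ln_1 in *. unfold Rdiv in *. rewrite Rinv_1 in *. nra.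
Qed.

Lemma h2_le_ln2 x : 0 <= x <= 1 -> h2 x <= ln 2.
Proof.
  intros Hx. unfold h2.
  pose proof (xlnx_ge x (/ 2) ltac:(lra) ltac:(lra)).
  pose proof (xlnx_ge (1 - x) (/ 2) ltac:(lra) ltac:(lra)).
  rewrite ln_Rinv in * by lra. nra.
Qed.

Lemma h2_mix_gap_le_ln2 a x y : 0 <= a <= 1 -> 0 <= x <= 1 -> 0 <= y <= 1 ->
  h2 (a * x + (1 - a) * y) - a * h2 x - (1 - a) * h2 y <= ln 2.
Proof.
  intros Ha Hx Hy.
  pose proof (h2_le_ln2 (a * x + (1 - a) * y) ltac:(nra)).
  pose proof (Rmult_le_pos _ _ (proj1 Ha) (h2_nonneg x Hx)).
  pose proof (Rmult_le_pos (1 - a) _ ltac:(lra) (h2_nonneg y Hy)).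
  lra.
Qed.

Lemma ln2_lt_8_9 : ln 2 < 8 / 9.
Proof.
  rewrite <- (ln_exp (8 / 9)). apply ln_increasing; [lra|].
  replace (8 / 9) with (4 / 9 + 4 / 9) by field. rewrite exp_plus.
  pose proof (exp_ineq1 (4 / 9) ltac:(lra)). nra.
Qed.

Lemma exists_increment_le_mean (g : nat -> R) n : (0 < n)%nat ->
  exists k, (k < n)%nat /\ INR n * (g (S k) - g k) <= g n - g 0%nat.
Proof.
  intros Hn. destruct n as [|n]; [lia|]. clear Hn.
  induction n as [|n IH].
  - exists 0%nat. split; [lia|]. simpl. lra.
  - destruct IH as [k [Hk Hle]].
    pose proof (pos_INR (S n)). rewrite S_INR.
    (* The smaller of the old witness's increment and the new last one works. *)
    destruct (Rle_dec (g (S (S n)) - g (S n)) (g (S k) - g k)).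
    + exists (S n). split; [lia|]. nra.
    + exists k. split; [lia|]. nra.
Qed.

Lemma incr_upto_le (p : nat -> R) n :
  (forall k, (k < n)%nat -> p k <= p (S k)) ->
  forall j k, (j <= k <= n)%nat -> p j <= p k.
Proof.
  intros Hinc j k. induction k as [|k IH]; intros Hjk.
  - replace j with 0%nat by lia. lra.
  - destruct (Nat.eq_dec j (S k)) as [->|Hne]; [lra|].
    pose proof (Hinc k ltac:(lia)). pose proof (IH ltac:(lia)). lra.
Qed.

Lemma sq_add_sq_le A B N : 0 <= A -> 0 <= B -> 3 <= N -> N * (A + B) <= 2 ->
  A ^ 2 + B ^ 2 <= 8 / (N + 1) ^ 2.
Proof.
  intros HA HB HN Hsum.
  assert (Hsq : (N * (A + B)) ^ 2 <= 4).
  { pose proof (Rmult_le_pos N (A + B) ltac:(lra) ltac:(lra)). nra. }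
  assert (H : (A ^ 2 + B ^ 2) * (N + 1) ^ 2 <= 8).
  { assert (HAB : A ^ 2 + B ^ 2 <= (A + B) ^ 2) by nra.
    assert (HN1 : (N + 1) ^ 2 <= 2 * N ^ 2) by nra.
    pose proof (Rmult_le_compat (A ^ 2 + B ^ 2) ((A + B) ^ 2) ((N + 1) ^ 2) (2 * N ^ 2)
                 ltac:(nra) ltac:(nra) HAB HN1).
    replace ((A + B) ^ 2 * (2 * N ^ 2)) with (2 * (N * (A + B)) ^ 2) in * by ring.
    lra. }
  apply (Rmult_le_reg_r ((N + 1) ^ 2)); [nra|].
  unfold Rdiv. rewrite Rmult_assoc, Rinv_l by nra. lra.
Qed.

Lemma ln2_le_8_div_sq N : 1 <= N <= 2 -> ln 2 <= 8 / (N + 1) ^ 2.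
Proof.
  intros HN. pose proof ln2_lt_8_9.
  assert (8 / 9 <= 8 / (N + 1) ^ 2)
    by (apply Rmult_le_compat_l; [lra | apply Rinv_le_contravar; nra]).
  lra.
Qed.

Lemma sqrt_sub_sqrt_1_minus_bounds x : 0 <= x <= 1 ->
  -1 <= sqrt x - sqrt (1 - x) <= 1.
Proof.
  intros Hx.
  pose proof (sqrt_le_1_alt x 1 ltac:(lra)). pose proof (sqrt_pos x).
  pose proof (sqrt_le_1_alt (1 - x) 1 ltac:(lra)). pose proof (sqrt_pos (1 - x)).
  rewrite sqrt_1 in *. lra.
Qed.

Theorem corollary1 (n : nat) (p : nat -> R) :
  (1 <= n)%nat ->
  0 <= p 0%nat ->
  (forall k : nat, (k < n)%nat -> p k <= p (S k)) ->
  p n <= 1 ->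
  exists i : nat, (1 <= i <= n)%nat /\
    forall alpha : R, 0 <= alpha <= 1 ->
      h2 (alpha * p (i - 1)%nat + (1 - alpha) * p i)
        - alpha * h2 (p (i - 1)%nat) - (1 - alpha) * h2 (p i)
      <= 8 / (INR n + 1) ^ 2.
Proof.
  intros Hn Hp0 Hinc Hpn.
  pose proof (incr_upto_le p n Hinc) as Hmono.
  assert (Hp : forall k, (k <= n)%nat -> 0 <= p k <= 1).
  { intros k Hk. pose proof (Hmono 0%nat k ltac:(lia)).
    pose proof (Hmono k n ltac:(lia)). lra. }
  destruct (Compare_dec.le_lt_dec n 2) as [Hsmall|Hbig].
  - exists 1%nat. split; [lia|]. intros a Ha.
    eapply Rle_trans; [apply h2_mix_gap_le_ln2; auto; apply Hp; lia|].
    apply ln2_le_8_div_sq.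
    split; [apply (le_INR 1) | apply (le_INR n 2)]; lia.
  - set (g k := sqrt (p k) - sqrt (1 - p k)).
    destruct (exists_increment_le_mean g n ltac:(lia)) as [k [Hk Hkle]].
    exists (S k). split; [lia|]. intros a Ha. rewrite Nat.sub_succ, Nat.sub_0_r.
    eapply Rle_trans; [apply h2_mix_gap_le; auto; apply Hp; lia|].
    pose proof (Hinc k Hk).
    apply sq_add_sq_le.
    + pose proof (sqrt_le_1_alt (p k) (p (S k))). lra.
    + pose proof (sqrt_le_1_alt (1 - p (S k)) (1 - p k)). lra.
    + pose proof (le_INR 3 n ltac:(lia)) as H3. simpl in H3. lra.
    + replace (sqrt (p (S k)) - sqrt (p k) + (sqrt (1 - p k) - sqrt (1 - p (S k))))
        with (g (S k) - g k) by (unfold g; ring).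
      pose proof (sqrt_sub_sqrt_1_minus_bounds (p n) (Hp n ltac:(lia))).
      pose proof (sqrt_sub_sqrt_1_minus_bounds (p 0%nat) (Hp 0%nat ltac:(lia))).
      unfold g in *. lra.
Qed.
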